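(* For every fixed $j\in[0,1]$, the function $c\mapsto g_c(j)$ is increasing on $c>0$, where $$g_c(j)=4\int_0^{c\sqrt{1-j^2}}\frac{\sqrt{(c^2(1-j^2)-z^2)(c^4+(1-c^2)z^2)}}{c(c^2-z^2)}\,dz.$$ Consequently, for $c_1<c_2$ one has $\mathbb{X}_{\Omega_{c_1}}\subset\mathbb{X}_{\Omega_{c_2}}$.
   Context: $\Omega_c\subset\mathbb{R}^2_{\ge0}$ is the relatively open region bounded by the coordinate axes and the curve $(g_c(j),g_c(j)+2\pi j)$, $0\le j\le1$, together with $(g_c(-j)-2\pi j,g_c(-j))$, $-1\le j\le0$. $\mathbb{X}_\Omega=\{(z_1,z_2)\in\mathbb{C}^2:(\pi|z_1|^2,\pi|z_2|^2)\in\Omega\}$. *)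

From HB Require Import structures.
From mathcomp Require Import all_boot all_order all_algebra.
From mathcomp Require Import all_classical all_reals all_analysis.
From mathcomp Require Import complex.
Set Implicit Arguments. Unset Strict Implicit. Unset Printing Implicit Defensive.
Import Order.TTheory GRing.Theory Num.Theory.
Local Open Scope classical_set_scope.
Local Open Scope ring_scope.

(* g_c(j) = 4 \int_0^{c sqrt(1-j^2)} sqrt((c^2(1-j^2)-z^2)(c^4+(1-c^2)z^2)) / (c(c^2-z^2)) dz,
   taken as a Lebesgue integral (the integrand is unbounded near z = c when j = 0,
   so this is an improper Riemann integral; the Lebesgue integral agrees). *)
Definition gfun (R : realType) (c j : R) : R :=
  4 * Rintegral (@lebesgue_measure R) `[0, c * Num.sqrt (1 - j ^+ 2)]
      (fun z => Num.sqrt ((c ^+ 2 * (1 - j ^+ 2) - z ^+ 2) * (c ^+ 4 + (1 - c ^+ 2) * z ^+ 2))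
                / (c * (c ^+ 2 - z ^+ 2))).

Definition curve (R : realType) (c j : R) : R * R :=
  if 0 <= j then (gfun c j, gfun c j + 2 * pi * j)
  else (gfun c (- j) - 2 * pi * j, gfun c (- j)).

(* Omega_c: the relatively open region of R^2_{>=0} bounded by the coordinate axes
   and the curve.  Each diagonal line {y - x = 2 pi j}, j in [-1,1], meets the curve
   exactly at curve c j; the region consists of the points of R^2_{>=0} lying on such
   a line strictly below (south-west of) the curve point. *)
Definition Omega (R : realType) (c : R) : set (R * R) :=
  [set p | 0 <= p.1 /\ 0 <= p.2 /\
           exists j, -1 <= j <= 1 /\ exists t, 0 < t /\
             p = ((curve c j).1 - t, (curve c j).2 - t)].

Definition normsqC (R : realType) (z : R[i]) : R := let: Complex a b := z in a ^+ 2 + b ^+ 2.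

Definition XOmega (R : realType) (O : set (R * R)) : set (R[i] * R[i]) :=
  [set z | O (pi * normsqC z.1, pi * normsqC z.2)].

From HB Require Import structures.
From mathcomp Require Import all_boot all_order all_algebra.
From mathcomp Require Import all_classical all_reals all_analysis.
From mathcomp Require Import measurable_realfun lebesgue_measure lebesgue_integral.
From mathcomp Require Import ring.
From mathcomp Require Import complex.
Import Order.TTheory GRing.Theory Num.Theory.
Local Open Scope classical_set_scope.
Local Open Scope ring_scope.

(* The substitution z = c s moves the c-dependence of g_c(j) from the domain
   of integration into the integrand:
     g_c(j) = 4 \int_0^{sqrt(1-j^2)} h_c(j,s) ds,
     h_c(j,s) = sqrt((1-j^2-s^2)(c^2(1-s^2)+s^2)) / (1-s^2),
   and h_c(j,s) is visibly nondecreasing in c.  The integrals are Lebesgue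
   integrals in the extended reals and g_c(j) only sees their [fine] part; to
   compare the fine parts we also use the domination h_{c2} <= (c2/c1) h_{c1},
   which shows that both integrals are finite or both are infinite. *)

Section Dilation.
Context {R : realType}.
Local Notation mu := (@lebesgue_measure R).

(* Inversion is Borel measurable: it is continuous off 0 and {0} is measurable. *)
Lemma measurable_inv : measurable_fun [set: R] (@GRing.inv R).
Proof.
have -> : [set: R] = ~` [set 0] `|` [set 0] by rewrite setUC setUCr.
apply/measurable_funU => //; first exact: measurableC.
split; last exact: measurable_fun_set1.
apply: open_continuous_measurable_fun.
  by rewrite openC; exact/accessible_closed_set1/hausdorff_accessible/Rhausdorff.
by move=> x; rewrite inE /= => /eqP x0; exact: inv_continuous.
Qed.

Lemma preimage_mulr_itvoc (c a b : R) : 0 < c ->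
  ( *%R c) @^-1` `]a, b]%classic = `]a / c, b / c]%classic.
Proof.
move=> c0; apply/seteqP; split => x /=; rewrite !in_itv /= => /andP[ax xb].
  by rewrite ltr_pdivrMr // ler_pdivlMr // ![x * c]mulrC ax xb.
by rewrite -ltr_pdivrMl // -ler_pdivlMl // ![c^-1 * _]mulrC ax xb.
Qed.

Lemma preimage_mulr_itvcc (c b : R) : 0 < c ->
  ( *%R c) @^-1` `[0, c * b]%classic = `[0, b]%classic.
Proof.
by move=> c0; apply/seteqP; split => x /=; rewrite !in_itv /= pmulr_rge0 // ler_pM2l.
Qed.

(* Lebesgue measure is c times its image under the dilation x |-> c x:
   both measures agree on half-open intervals. *)
Lemma lebesgue_measure_dilation (c : R) (c0 : 0 < c) (A : set R) :
  measurable A ->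
  mu A = (c%:E * pushforward mu (( *%R c) : _ -> measurableTypeR R) A)%E.
Proof.
move=> mA.
have := @lebesgue_measure_unique R
  (mscale (NngNum (ltW c0)) (pushforward mu (( *%R c) : _ -> measurableTypeR R))).
apply => //= _ [[a b]] _ <-.
rewrite /mscale /=; unfold pushforward; rewrite preimage_mulr_itvoc //.
rewrite !lebesgue_measure_itv /= !lte_fin ltr_pM2r ?invr_gt0 //.
case: ifPn => ab //; last by rewrite mule0.
by rewrite -!EFinB -EFinM -mulrBl mulrCA divff ?gt_eqF // mulr1.
Qed.

Lemma ge0_integral_dilation (c b : R) (f : R -> R) : 0 < c ->
  measurable_fun [set: R] f -> (forall x, 0 <= x <= c * b -> 0 <= f x) ->
  (\int[mu]_(z in `[0%R, (c * b)%R]) (f z)%:E =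
   c%:E * \int[mu]_(s in `[0%R, b]) (f (c * s))%:E)%E.
Proof.
move=> c0 mf f0.
have mfE : measurable_fun `[0, c * b]%classic (EFin \o f).
  by apply/measurable_EFinP; exact: measurable_funTS.
have f0E x : x \in `[0, c * b]%classic -> (0 <= (f x)%:E)%E.
  by rewrite inE /= in_itv /= lee_fin => /f0.
rewrite (eq_measure_integral
  (mscale (NngNum (ltW c0)) (pushforward mu (( *%R c) : _ -> measurableTypeR R))));
  last by move=> A mA _; exact: lebesgue_measure_dilation.
rewrite ge0_integral_mscale //= ge0_integral_pushforward //.
by rewrite preimage_mulr_itvcc.
Qed.

End Dilation.

(* [fine] is monotone between nonnegative extended reals E1 <= E2 as soon as
   E2 is dominated by a multiple of E1: then E1 and E2 are finite together. *)
Lemma fine_le_dominated (R : realType) (E1 E2 : \bar R) (K : R) :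
  (0 <= E1)%E -> (E1 <= E2)%E -> (E2 <= K%:E * E1)%E -> fine E1 <= fine E2.
Proof. by case: E1 => [r||] //; case: E2 => [q||]. Qed.

Section DominatedFine.
Context d (T : measurableType d) (R : realType).

Lemma fine_integral_le_dominated (mu : {measure set T -> \bar R}) (D : set T)
    (f g : T -> R) (K : R) : measurable D -> 0 <= K ->
  measurable_fun D f -> measurable_fun D g ->
  (forall x, D x -> 0 <= f x <= g x) -> (forall x, D x -> g x <= K * f x) ->
  fine (\int[mu]_(x in D) (f x)%:E)%E <= fine (\int[mu]_(x in D) (g x)%:E)%E.
Proof.
move=> mD K0 mf mg fg gKf.
have f0 x : D x -> (0 <= (f x)%:E)%E by move=> /fg /andP[].
have g0 x : D x -> (0 <= (g x)%:E)%E.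
  by move=> Dx; have /andP[f0x fgx] := fg x Dx; rewrite lee_fin (le_trans f0x).
have mfE : measurable_fun D (EFin \o f) by exact/measurable_EFinP.
have mgE : measurable_fun D (EFin \o g) by exact/measurable_EFinP.
apply: (@fine_le_dominated _ _ _ K); first exact: integral_ge0.
  by apply: ge0_le_integral => // x /fg /andP[_]; rewrite lee_fin.
rewrite -ge0_integralZl_EFin //; apply: ge0_le_integral => //.
by apply/measurable_EFinP; exact: measurable_funM.
Qed.

End DominatedFine.

Section Integrand.
Context {R : realType}.
Local Notation mu := (@lebesgue_measure R).

Definition gintegrand (c j z : R) : R :=
  Num.sqrt ((c ^+ 2 * (1 - j ^+ 2) - z ^+ 2) * (c ^+ 4 + (1 - c ^+ 2) * z ^+ 2))
  / (c * (c ^+ 2 - z ^+ 2)).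

(* The integrand after the substitution z = c s, see [gintegrand_dilation]. *)
Definition grescaled (c j s : R) : R :=
  Num.sqrt ((1 - j ^+ 2 - s ^+ 2) * (c ^+ 2 * (1 - s ^+ 2) + s ^+ 2)) / (1 - s ^+ 2).

Lemma measurable_gintegrand (c j : R) : measurable_fun [set: R] (gintegrand c j).
Proof.
have msq : measurable_fun [set: R] (fun z : R => z ^+ 2) by [].
apply: measurable_funM.
  apply: (measurableT_comp (continuous_measurable_fun (@sqrt_continuous R))).
  apply: measurable_funM; first exact: measurable_funB.
  by apply: measurable_funD => //; exact: measurable_funM.
apply: (measurableT_comp measurable_inv).
by apply: measurable_funM => //; exact: measurable_funB.
Qed.

Lemma gintegrand_dilation (c j s : R) : 0 < c ->
  c * gintegrand c j (c * s) = grescaled c j s.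
Proof.
move=> c0; have cn0 : c != 0 by rewrite gt_eqF.
rewrite /gintegrand /grescaled.
have -> : (c ^+ 2 * (1 - j ^+ 2) - (c * s) ^+ 2) * (c ^+ 4 + (1 - c ^+ 2) * (c * s) ^+ 2)
  = (c ^+ 2) ^+ 2 * ((1 - j ^+ 2 - s ^+ 2) * (c ^+ 2 * (1 - s ^+ 2) + s ^+ 2)) by ring.
rewrite sqrtrM ?exprn_ge0 ?sqrtr_sqr ?ger0_norm ?exprn_ge0 ?ltW //.
have -> : c * (c ^+ 2 - (c * s) ^+ 2) = c ^+ 3 * (1 - s ^+ 2) by ring.
rewrite invfM; move: (Num.sqrt _) (_ ^-1 : R) => X Y.
by field.
Qed.

Lemma measurable_grescaled (c j : R) : 0 < c ->
  measurable_fun [set: R] (grescaled c j).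
Proof.
move=> c0; rewrite -(funext (fun s => @gintegrand_dilation c j s c0)).
apply: measurable_funM => //.
exact: measurableT_comp (measurable_gintegrand c j) _.
Qed.

Section GrescaledBounds.
Variables (j s : R).
Hypothesis (hs : s ^+ 2 <= 1 - j ^+ 2).

Let X := 1 - j ^+ 2 - s ^+ 2.
Let Y := 1 - s ^+ 2.
Let X_ge0 : 0 <= X. Proof. by rewrite /X subr_ge0. Qed.
Let Y_ge0 : 0 <= Y.
Proof. by rewrite /Y subr_ge0 (le_trans hs) // gerDl oppr_le0 sqr_ge0. Qed.

Lemma grescaled_ge0 (c : R) : 0 <= grescaled c j s.
Proof. by rewrite divr_ge0 ?sqrtr_ge0. Qed.

Lemma grescaled_le (c1 c2 : R) : 0 <= c1 <= c2 -> grescaled c1 j s <= grescaled c2 j s.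
Proof.
move=> /andP[c10 c12]; rewrite ler_wpM2r ?invr_ge0 // ler_wsqrtr //.
rewrite ler_wpM2l // lerD2r ler_wpM2r // ler_sqr ?nnegrE //.
exact: le_trans c12.
Qed.

Lemma grescaled_le_ratio (c1 c2 : R) : 0 < c1 <= c2 ->
  grescaled c2 j s <= (c2 / c1) * grescaled c1 j s.
Proof.
move=> /andP[c10 c12]; set k := c2 / c1.
have k1 : 1 <= k by rewrite /k ler_pdivlMr // mul1r.
have c2E : c2 = k * c1 by rewrite /k divfK // gt_eqF.
rewrite /grescaled -/X -/Y mulrA ler_wpM2r ?invr_ge0 //.
rewrite -[k]ger0_norm ?(le_trans ler01) // -sqrtr_sqr -sqrtrM ?sqr_ge0 //.
rewrite ler_wsqrtr // c2E -subr_ge0.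
have -> : k ^+ 2 * (X * (c1 ^+ 2 * Y + s ^+ 2)) - X * ((k * c1) ^+ 2 * Y + s ^+ 2)
  = (k ^+ 2 - 1) * X * s ^+ 2 by ring.
rewrite mulr_ge0 ?sqr_ge0 // mulr_ge0 // subr_ge0 exprn_ege1 //.
Qed.

End GrescaledBounds.

Lemma sqr_le_of_le_sqrt (a s : R) : 0 <= a -> 0 <= s <= Num.sqrt a -> s ^+ 2 <= a.
Proof.
move=> a0 /andP[s0 sa]; rewrite -[leRHS](sqr_sqrtr a0).
by rewrite ler_sqr ?nnegrE ?sqrtr_ge0.
Qed.

Lemma gintegrand_ge0 (c j z : R) : 0 < c -> j ^+ 2 <= 1 ->
  0 <= z <= c * Num.sqrt (1 - j ^+ 2) -> 0 <= gintegrand c j z.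
Proof.
move=> c0 j1 /andP[z0 zc]; have cn0 : c != 0 by rewrite gt_eqF.
rewrite -(pmulr_rge0 _ c0) -[z](mulVKf cn0) gintegrand_dilation //.
apply/grescaled_ge0/sqr_le_of_le_sqrt; first by rewrite subr_ge0.
by rewrite mulr_ge0 ?invr_ge0 ?(ltW c0) //= ler_pdivrMl.
Qed.

Lemma gfun_rescaled (c j : R) : 0 < c -> j ^+ 2 <= 1 ->
  gfun c j =
  4 * fine (\int[mu]_(s in `[0%R, Num.sqrt (1 - j ^+ 2)]) (grescaled c j s)%:E)%E.
Proof.
move=> c0 j1; rewrite /gfun /Rintegral.
rewrite (@ge0_integral_dilation R c _ (gintegrand c j)) //; last first.
- by move=> x; exact: gintegrand_ge0.
- exact: measurable_gintegrand.
rewrite -ge0_integralZl_EFin ?(ltW c0) //.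
- by under eq_integral do rewrite -EFinM (gintegrand_dilation _ _ _ c0).
- move=> s /=; rewrite in_itv /= => /andP[s0 st]; rewrite lee_fin gintegrand_ge0 //.
  by rewrite mulr_ge0 ?(ltW c0) //= ler_pM2l.
- apply/measurable_EFinP/measurable_funTS.
  exact: measurableT_comp (measurable_gintegrand c j) _.
Qed.

Lemma gfun_le (j c1 c2 : R) : j ^+ 2 <= 1 -> 0 < c1 <= c2 -> gfun c1 j <= gfun c2 j.
Proof.
move=> j1 /andP[c10 c12]; have c20 : 0 < c2 := lt_le_trans c10 c12.
rewrite !gfun_rescaled // ler_wpM2l //.
have range s : `[0%R, Num.sqrt (1 - j ^+ 2)]%classic s -> s ^+ 2 <= 1 - j ^+ 2.
  by rewrite /= in_itv /=; apply: sqr_le_of_le_sqrt; rewrite subr_ge0.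
apply: (@fine_integral_le_dominated _ _ _ _ _ _ _ (c2 / c1)) => //.
- by rewrite divr_ge0 ?ltW.
- by apply: measurable_funTS; exact: measurable_grescaled.
- by apply: measurable_funTS; exact: measurable_grescaled.
- by move=> s /range hs; rewrite grescaled_ge0 //= grescaled_le // (ltW c10) c12.
- by move=> s /range hs; rewrite grescaled_le_ratio // c10.
Qed.

End Integrand.

Section Region.
Context {R : realType}.

Lemma curve_diagonal_shift (c1 c2 j : R) :
  curve c2 j = ((curve c1 j).1 + (gfun c2 `|j| - gfun c1 `|j|),
                (curve c1 j).2 + (gfun c2 `|j| - gfun c1 `|j|)).
Proof.
rewrite /curve; case: ifPn => [j0|]; last rewrite -ltNge => j0.
- by rewrite ger0_norm //; congr pair => /=; ring.
- by rewrite ltr0_norm //; congr pair => /=; ring.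
Qed.

(* Omega_c grows with c as soon as g_c(j) does for every j in [0,1]: a point
   south-west of the old curve point lies south-west of the new one as well. *)
Lemma Omega_subset (c1 c2 : R) :
  (forall j, 0 <= j <= 1 -> gfun c1 j <= gfun c2 j) -> Omega c1 `<=` Omega c2.
Proof.
move=> g12 p [p1 [p2 [j [hj [t [t0 pE]]]]]].
set d := gfun c2 `|j| - gfun c1 `|j|.
have d0 : 0 <= d by rewrite subr_ge0 g12 // normr_ge0 /= ler_norml.
do 2!split => //; exists j; split => //; exists (t + d); split.
- by rewrite ltr_wpDr.
- by rewrite pE (curve_diagonal_shift c1 c2) /d; congr pair => /=; ring.
Qed.

Lemma XOmega_subset (O1 O2 : set (R * R)) : O1 `<=` O2 -> XOmega O1 `<=` XOmega O2.
Proof. by move=> O12 z; exact: O12. Qed.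

End Region.

Theorem mainTheorem13 (R : realType) :
  (forall j : R, 0 <= j <= 1 ->
     forall c1 c2 : R, 0 < c1 -> c1 <= c2 -> gfun c1 j <= gfun c2 j) /\
  (forall c1 c2 : R, 0 < c1 -> c1 < c2 -> XOmega (Omega c1) `<=` XOmega (Omega c2)).
Proof.
have gfun_mono (j c1 c2 : R) :
    0 <= j <= 1 -> 0 < c1 -> c1 <= c2 -> gfun c1 j <= gfun c2 j.
  by move=> /andP[j0 j1] c10 c12; apply: gfun_le; rewrite ?exprn_ile1 ?c10.
split=> [j hj c1 c2 | c1 c2 c10 c12]; first exact: gfun_mono.
apply: XOmega_subset; apply: Omega_subset => j hj.
exact: gfun_mono (ltW c12).
Qed.
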